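(* For every $k\ge0$, \[ \psi_k(z)=\frac{t^{k+1}}{z^{2k+1}(1-t)}\cdot\frac{\mu_3^{k+1}-\mu_2^{k+1}}{\mu_3-\mu_2} =\frac{t^{k+1}}{z^{2k+1}(1-t)}\sum_{i=0}^{\lfloor k/2\rfloor}(-1)^i\binom{k-i}{i}(2-t)^{k-2i}(1-t)^{2i}, \] and $\varphi_0(z)=\dfrac1{1-t}$, $\varphi_k(z)=\dfrac1z\psi_{k-1}(z)-\psi_{k-2}(z)$ for $k\ge1$ (with $\psi_{-1}=0$).
   Context: The numbers $c_{n,k},d_{n,k}$ ($n,k\ge0$) count partial reverse S-Motzkin paths (S-Motzkin paths read from right to left, stopped after $n$ steps) ending at height $k$ whose last non-up step is a level step, resp. a down step; equivalently they are defined by $c_{0,0}=1$, $d_{0,0}=0$, $c_{0,k}=d_{0,k}=0$ for $k\ge1$, and for $n\ge1$, $k\ge0$: $c_{n,k}=c_{n-1,k-1}+d_{n-1,k}$, $d_{n,k}=d_{n-1,k-1}+c_{n-1,k+1}$, with $c_{n-1,-1}=d_{n-1,-1}=0$. $\varphi_k(z)=\sum_{n\ge0}c_{n,k}z^n$, $\psi_k(z)=\sum_{n\ge0}d_{n,k}z^n$. $t$ is the power series in $z$ with $z^3=t(1-t)^2$, $t=z^3+O(z^6)$; $\mu_2,\mu_3$ are the roots of $X^2-(2-t)X+(1-t)^2$ (explicitly $\mu_{2,3}=(2-t\mp\sqrt{4t-3t^2})/2$). *)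

(* Formal power series over rat are represented by their
   coefficient sequences (nat -> rat); equality of series is pointwise (=1). *)
From mathcomp Require Import all_boot all_order all_algebra.
Set Implicit Arguments. Unset Strict Implicit. Unset Printing Implicit Defensive.
Import GRing.Theory Num.Theory.
Local Open Scope ring_scope.

Definition fps := nat -> rat.

Definition fC (a : rat) : fps := fun n => if n is 0%N then a else 0.
Definition fX : fps := fun n => if n == 1%N then 1 else 0.
Definition fadd (f g : fps) : fps := fun n => f n + g n.
Definition fopp (f : fps) : fps := fun n => - f n.
Definition fsub (f g : fps) : fps := fadd f (fopp g).
Definition fscale (a : rat) (f : fps) : fps := fun n => a * f n.
Definition fmul (f g : fps) : fps := fun n => \sum_(i < n.+1) f i * g (n - i)%N.
Definition fexp (f : fps) (m : nat) : fps := iter m (fmul f) (fC 1).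
Definition fsum (m : nat) (F : nat -> fps) : fps := fun n => \sum_(i < m) F i n.
(** substitution z := w^2 : a series in z seen as a series in w = z^(1/2)
    (used to host the Puiseux series mu_2, mu_3). *)
Definition fup (f : fps) : fps := fun n => if odd n then 0 else f n./2.

Fixpoint c (n k : nat) {struct n} : nat :=
  match n with
  | 0 => (k == 0)%N
  | n'.+1 => ((if k is k'.+1 then c n' k' else 0) + d n' k)%N
  end
with d (n k : nat) {struct n} : nat :=
  match n with
  | 0 => 0%N
  | n'.+1 => ((if k is k'.+1 then d n' k' else 0) + c n' k.+1)%N
  end.

Definition phi (k : nat) : fps := fun n => (c n k)%:R.
Definition psi (k : nat) : fps := fun n => (d n k)%:R.
Definition psi_prev (k : nat) : fps :=
  if k is k'.+1 then psi k' else fun _ => 0.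

Definition is_t (t : fps) : Prop :=
  fexp fX 3 =1 fmul t (fexp (fsub (fC 1) t) 2) /\
  forall n, (n < 6)%N -> t n = fexp fX 3 n.

Definition cheb_sum (t : fps) (k : nat) : fps :=
  fsum (k./2).+1 (fun i =>
    fscale ((-1) ^+ i * ('C(k - i, i))%:R)
      (fmul (fexp (fsub (fC 2) t) (k - 2 * i)) (fexp (fsub (fC 1) t) (2 * i)))).

Definition is_sqrt_disc (t s : fps) : Prop :=
  fmul s s =1 fup (fsub (fscale 4 t) (fscale 3 (fexp t 2))).

Definition mu2 (t s : fps) : fps := fscale (1 / 2) (fsub (fup (fsub (fC 2) t)) s).
Definition mu3 (t s : fps) : fps := fscale (1 / 2) (fadd (fup (fsub (fC 2) t)) s).

From HB Require Import structures.
From mathcomp Require Import all_boot all_order all_algebra.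
From mathcomp Require Import ring zify.
From mathcomp.classical Require Import boolp.
Set Implicit Arguments. Unset Strict Implicit. Unset Printing Implicit Defensive.
Import GRing.Theory Num.Theory.
Local Open Scope ring_scope.

(* Existence of t and of the square root of the discriminant 4t - 3t^2 comes
   from a fixed-point principle for contractive maps on series.
   The recurrences for c and d characterise (phi_k, psi_k) uniquely, so it
   suffices to check that the explicit candidates
     psi_k = z^(k+2) u^(k+1) w U_k,   phi_0 = w,
     phi_(k+1) = z^(k+1) u^k w (u U_k - U_(k-1)),
   with t = z^3 u, u = 1/(1-t)^2, w = 1/(1-t), satisfy them; here U_k is the
   Chebyshev-type sum of the statement, which obeys U_(k+2) = (2-t) U_(k+1)
   - (1-t)^2 U_k.  Since mu_2, mu_3 are the roots of X^2 - (2-t) X + (1-t)^2,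
   this recurrence also yields U_k = (mu_3^(k+1) - mu_2^(k+1))/(mu_3 - mu_2).
   The recurrence phi_(k+1) = psi_k/z - psi_(k-1) is that of d itself. *)

(* Every coefficient of a product or sum of series only depends
   on finitely many coefficients of the factors, so identities of {poly rat}
   transfer to series through truncations. *)
Definition approx (N : nat) (P : {poly rat}) (f : fps) :=
  forall i, (i < N)%N -> P`_i = f i.

Definition trunc_fps (N : nat) (f : fps) : {poly rat} := \poly_(i < N) f i.

Lemma approx_trunc N f : approx N (trunc_fps N f) f.
Proof. by move=> i Hi; rewrite coef_poly Hi. Qed.
Arguments approx_trunc : clear implicits.

Lemma approx_mul N P Q f g :
  approx N P f -> approx N Q g -> approx N (P * Q) (fmul f g).
Proof.
move=> HP HQ i Hi; rewrite coefM /fmul; apply: eq_bigr => j _.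
rewrite HP ?HQ //; last by apply: leq_ltn_trans Hi; rewrite -ltnS.
by apply: leq_ltn_trans Hi; rewrite leq_subr.
Qed.

Lemma approx_add N P Q f g :
  approx N P f -> approx N Q g -> approx N (P + Q) (fadd f g).
Proof. by move=> HP HQ i Hi; rewrite coefD HP ?HQ. Qed.

Lemma approx_C N a : approx N a%:P (fC a).
Proof. by move=> [|i] Hi; rewrite coefC. Qed.
Arguments approx_C : clear implicits.

Lemma approx_X N : approx N 'X fX.
Proof. by move=> i _; rewrite coefX /fX; case: (i == 1)%N. Qed.
Arguments approx_X : clear implicits.

Lemma approx_eq N P Q f g :
  approx N P f -> approx N Q g -> P = Q -> forall i, (i < N)%N -> f i = g i.
Proof. by move=> HP HQ E i Hi; rewrite -HP // -HQ // E. Qed.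

Lemma fmulA : associative fmul.
Proof.
move=> f g h; apply: funext => n.
have Hf := approx_trunc n.+1 f; have Hg := approx_trunc n.+1 g.
have Hh := approx_trunc n.+1 h.
apply: (approx_eq (approx_mul Hf (approx_mul Hg Hh))
                  (approx_mul (approx_mul Hf Hg) Hh)) => //.
exact: mulrA.
Qed.

Lemma fmulC : commutative fmul.
Proof.
move=> f g; apply: funext => n.
have Hf := approx_trunc n.+1 f; have Hg := approx_trunc n.+1 g.
by apply: (approx_eq (approx_mul Hf Hg) (approx_mul Hg Hf)) => //; rewrite mulrC.
Qed.

Lemma fmul1 : left_id (fC 1) fmul.
Proof.
move=> f; apply: funext => n; have Hf := approx_trunc n.+1 f.
by apply: (approx_eq (approx_mul (approx_C _ 1) Hf) Hf) => //; rewrite mul1r.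
Qed.

Lemma fmulDl : left_distributive fmul fadd.
Proof.
move=> f g h; apply: funext => n.
have Hf := approx_trunc n.+1 f; have Hg := approx_trunc n.+1 g.
have Hh := approx_trunc n.+1 h.
apply: (approx_eq (approx_mul (approx_add Hf Hg) Hh)
                  (approx_add (approx_mul Hf Hh) (approx_mul Hg Hh))) => //.
exact: mulrDl.
Qed.

Lemma faddA : associative fadd.
Proof. by move=> f g h; apply: funext => n; rewrite /fadd addrA. Qed.
Lemma faddC : commutative fadd.
Proof. by move=> f g; apply: funext => n; rewrite /fadd addrC. Qed.
Lemma fadd0 : left_id (fC 0) fadd.
Proof. by move=> f; apply: funext => -[|n]; rewrite /fadd /= add0r. Qed.
Lemma faddN : left_inverse (fC 0) fopp fadd.
Proof. by move=> f; apply: funext => -[|n]; rewrite /fadd /fopp /= addNr. Qed.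
Lemma fC1_neq0 : fC 1 != fC 0.
Proof. by apply/eqP => /(congr1 (fun f => f 0%N)) /eqP; rewrite oner_eq0. Qed.

HB.instance Definition _ := gen_eqMixin fps.
HB.instance Definition _ := gen_choiceMixin fps.
HB.instance Definition _ := GRing.isZmodule.Build fps faddA faddC fadd0 faddN.
HB.instance Definition _ :=
  GRing.Zmodule_isComNzRing.Build fps fmulA fmulC fmul1 fmulDl fC1_neq0.

Lemma fmulE (f g : fps) : fmul f g = f * g. Proof. by []. Qed.
Lemma faddE (f g : fps) : fadd f g = f + g. Proof. by []. Qed.
Lemma fsubE (f g : fps) : fsub f g = f - g. Proof. by []. Qed.
Lemma fC1E : fC 1 = 1 :> fps. Proof. by []. Qed.
Lemma fexpE (f : fps) m : fexp f m = f ^+ m.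
Proof. by elim: m => [|m IH] //; rewrite /fexp /= -/(fexp f m) IH exprS. Qed.

Lemma fps_eqfun (f g : fps) : f = g -> f =1 g. Proof. by move=> ->. Qed.

Lemma coef0_fps n : (0 : fps) n = 0. Proof. by case: n. Qed.
Lemma coefD_fps (f g : fps) n : (f + g) n = f n + g n. Proof. by []. Qed.
Lemma coefN_fps (f : fps) n : (- f) n = - f n. Proof. by []. Qed.

Lemma coef_fsum m (F : nat -> fps) n : (\sum_(i < m) F i) n = \sum_(i < m) F i n.
Proof.
exact: (big_morph (fun f : fps => f n) (fun f g => coefD_fps f g n) (coef0_fps n)).
Qed.

Lemma fsumE m F : fsum m F = \sum_(i < m) F i.
Proof. by apply: funext => n; rewrite coef_fsum. Qed.

Lemma coef_fXM f n : (fX * f) n = if n is n'.+1 then f n' else 0.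
Proof.
have := approx_mul (approx_X n.+1) (approx_trunc n.+1 f) (ltnSn n).
rewrite -fmulE => <-; rewrite coefXM; case: n => [|n] //=.
by rewrite coef_poly ltnW.
Qed.

Lemma fXM_inj f g : fX * f = fX * g -> f = g.
Proof.
move=> E; apply: funext => n.
by move/(congr1 (fun h => h n.+1)): E; rewrite !coef_fXM.
Qed.

Lemma fC_is_zmod_morphism : zmod_morphism fC.
Proof. by move=> a b; apply: funext => -[|n] //=; rewrite /fadd /fopp /= oppr0 addr0. Qed.

Lemma fC_is_monoid_morphism : monoid_morphism fC.
Proof.
split=> // a b; apply: funext => n.
apply: (approx_eq (approx_C n.+1 _) (approx_mul (approx_C n.+1 a) (approx_C n.+1 b))) => //.
exact: polyCM.
Qed.

HB.instance Definition _ :=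
  GRing.isZmodMorphism.Build rat fps fC fC_is_zmod_morphism.
HB.instance Definition _ :=
  GRing.isMonoidMorphism.Build rat fps fC fC_is_monoid_morphism.

Lemma fscaleE a f : fscale a f = fC a * f.
Proof.
apply: funext => n.
have := approx_mul (approx_C n.+1 a) (approx_trunc n.+1 f) (ltnSn n).
by rewrite -fmulE => <-; rewrite coefCM coef_poly ltnSn.
Qed.

(* The substitution z := w^2 is a ring morphism: it corresponds to composing
   truncations with 'X^2. *)
Lemma approx_up N P f : approx N P f -> approx N.*2 (P \Po 'X^2) (fup f).
Proof.
move=> HP i Hi; rewrite coef_comp_poly_Xn // /fup dvdn2.
case: (boolP (odd i)) => //= Ho; rewrite HP -?divn2 //.
by rewrite -muln2 in Hi; rewrite ltn_divLR.
Qed.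

Lemma fup_is_zmod_morphism : zmod_morphism fup.
Proof.
move=> f g; apply: funext => n.
by rewrite /fup -!fsubE /fsub /fadd /fopp; case: odd; rewrite ?subr0.
Qed.

Lemma fup_is_monoid_morphism : monoid_morphism fup.
Proof.
split=> [|f g]; first by apply: funext => -[|[|n]] //=; rewrite /fup /=; case: odd.
apply: funext => n.
have Hf := approx_trunc n.+1 f; have Hg := approx_trunc n.+1 g.
apply: (approx_eq (approx_up (approx_mul Hf Hg))
                  (approx_mul (approx_up Hf) (approx_up Hg))).
  exact: comp_polyM.
by rewrite -addnn; apply: leq_trans (leq_addr _ _).
Qed.

HB.instance Definition _ :=
  GRing.isZmodMorphism.Build fps fps fup fup_is_zmod_morphism.
HB.instance Definition _ :=
  GRing.isMonoidMorphism.Build fps fps fup fup_is_monoid_morphism.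

Lemma fup_fX : fup fX = fX * fX.
Proof.
apply: funext => n; rewrite coef_fXM; case: n => [|[|[|k]]] //.
by rewrite /fup /fX /=; case: ifP => // Hk; case: k Hk.
Qed.

Definition eq_upto (m : nat) (f g : fps) := forall i, (i < m)%N -> f i = g i.

Lemma eq_upto_mul m f f' g g' :
  eq_upto m f f' -> eq_upto m g g' -> eq_upto m (f * g) (f' * g').
Proof.
move=> Hf Hg i Hi; rewrite -!fmulE /fmul; apply: eq_bigr => j _.
rewrite Hf ?Hg //; last by apply: leq_ltn_trans Hi; rewrite -ltnS.
by apply: leq_ltn_trans Hi; rewrite leq_subr.
Qed.

Lemma eq_upto_add m f f' g g' :
  eq_upto m f f' -> eq_upto m g g' -> eq_upto m (f + g) (f' + g').
Proof. by move=> Hf Hg i Hi; rewrite !coefD_fps Hf ?Hg. Qed.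

Lemma eq_upto_opp m f f' : eq_upto m f f' -> eq_upto m (- f) (- f').
Proof. by move=> Hf i Hi; rewrite !coefN_fps Hf. Qed.

Lemma eq_upto_fXM m f g : eq_upto m f g -> eq_upto m.+1 (fX * f) (fX * g).
Proof. by move=> H [|i] Hi; rewrite !coef_fXM // H. Qed.

Lemma eq_upto_le m n f g : (n <= m)%N -> eq_upto m f g -> eq_upto n f g.
Proof. by move=> Hn H i Hi; apply: H; apply: leq_trans Hn. Qed.

Lemma eq_upto_trans m f g h : eq_upto m f g -> eq_upto m g h -> eq_upto m f h.
Proof. by move=> H1 H2 i Hi; rewrite H1 ?H2. Qed.

Definition contractive (F : fps -> fps) :=
  forall m f g, eq_upto m f g -> eq_upto m.+1 (F f) (F g).

(* Every contractive map has a fixed point: the coefficientwise limit of the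
   iterates of 0, since the k-th iterate is correct below order k. *)
Lemma contractive_fixpoint F : contractive F -> exists x, F x = x.
Proof.
move=> HF; pose it k := iter k F 0.
have step k : eq_upto k (it k) (it k.+1).
  by elim: k => [|k IH] //; apply: HF IH.
have stable k j : (k <= j)%N -> eq_upto k (it k) (it j).
  elim: j => [|j IH]; first by case: k.
  rewrite leq_eqVlt ltnS => /orP[/eqP -> //|Hkj].
  exact: eq_upto_trans (IH Hkj) (eq_upto_le Hkj (step j)).
exists (fun n => it n.+1 n); apply: funext => n.
have E : eq_upto n.+1 (fun n => it n.+1 n) (it n.+1).
  by move=> i Hi; apply: (stable i.+1 n.+1).
by rewrite (HF _ _ _ E n (ltnW (ltnSn _))) (step n.+1).
Qed.

Lemma fX3M g : fX ^+ 3 * g = fX * (fX * (fX * g)). Proof. by ring. Qed.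

Lemma coef_fX3 n : (fX ^+ 3 : fps) n = if n == 3%N then 1 else 0.
Proof. by rewrite -[fX ^+ 3]mulr1 fX3M; case: n => [|[|[|[|n]]]]; rewrite !coef_fXM. Qed.

(* t = z^3 w^2 with w = 1 + z^3 w^3 (so that w = 1/(1-t)) solves the defining
   equation of t. *)
Lemma exists_t : exists t, is_t t.
Proof.
have [w Hw] : exists w, 1 + fX ^+ 3 * (w * w * w) = w.
  apply: contractive_fixpoint => m f g H; apply: eq_upto_add => //.
  rewrite !fX3M; apply: eq_upto_le (eq_upto_fXM (eq_upto_fXM (eq_upto_fXM
    (eq_upto_mul (eq_upto_mul H H) H)))); lia.
exists (fX ^+ 3 * w ^+ 2).
have Hw1 : w * (1 - fX ^+ 3 * w ^+ 2) = 1.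
  transitivity (w - fX ^+ 3 * (w * w * w)); first by ring.
  by rewrite -{1}Hw addrK.
split.
  move=> n; rewrite fexpE fmulE fexpE fsubE fC1E.
  suff -> : fX ^+ 3 * w ^+ 2 * (1 - fX ^+ 3 * w ^+ 2) ^+ 2 = fX ^+ 3 by [].
  by rewrite -[RHS]mulr1 -(expr1n _ 2) -{2}Hw1; ring.
have w_low : eq_upto 3 w 1.
  by move=> [|[|[|i]]] // _; rewrite -Hw coefD_fps fX3M !coef_fXM addr0.
have t_low : eq_upto 6 (fX ^+ 3 * w ^+ 2) (fX ^+ 3 * 1).
  rewrite !fX3M; do 3 apply: eq_upto_fXM.
  by rewrite expr2 -(mulr1 1); apply: eq_upto_mul.
by move=> n Hn; rewrite t_low // mulr1 fexpE.
Qed.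

Lemma exists_sqrt (A : fps) (a : rat) : a != 0 -> A 0%N = a ^+ 2 ->
  exists r, r * r = A.
Proof.
move=> a0 HA0; pose A' : fps := fun n => A n.+1.
have HA : A = fC (a ^+ 2) + fX * A'.
  by apply: funext => -[|n]; rewrite coefD_fps coef_fXM /= ?addr0 ?add0r.
have [q Hq] : exists q, fC (2 * a)^-1 * (A' - fX * (q * q)) = q.
  apply: contractive_fixpoint => m f g H; apply: eq_upto_mul => //.
  by apply: eq_upto_add => //; apply/eq_upto_opp/eq_upto_fXM/eq_upto_mul.
have Hq' : fC (2 * a) * q = A' - fX * (q * q).
  rewrite -{1}Hq mulrA -rmorphM mulfV ?rmorph1 ?mul1r //.
  by rewrite mulf_neq0 ?pnatr_eq0.
exists (fC a + fX * q); rewrite HA; apply/eqP; rewrite -subr_eq0; apply/eqP.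
transitivity (fX * (fC (2 * a) * q - (A' - fX * (q * q)))).
  by rewrite !rmorphM (rmorph_nat fC 2); ring.
by rewrite Hq' subrr mulr0.
Qed.

Section Chebyshev.
Variable R : comNzRingType.
Variables e p : R.

Definition cheb_term k i : R :=
  (-1) ^+ i * ('C(k - i, i))%:R * (e ^+ (k - 2 * i) * p ^+ i).
Definition cheb_partial N k := \sum_(i < N) cheb_term k i.
Definition cheb k := cheb_partial (k./2).+1 k.

Lemma cheb_term_small k i : (k./2 < i)%N -> cheb_term k i = 0.
Proof. by move=> H; rewrite /cheb_term bin_small ?mulr0 ?mul0r //; lia. Qed.

Lemma cheb_partial_cheb N k : (k./2 < N)%N -> cheb_partial N k = cheb k.
Proof.
elim: N => [|N IH] //; rewrite ltnS leq_eqVlt => /orP[/eqP <- //|Hlt].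
by rewrite /cheb_partial big_ord_recr /= -/(cheb_partial N k) IH // cheb_term_small // addr0.
Qed.

(* Pascal's rule C(k+1-i, i+1) = C(k-i, i+1) + C(k-i, i), termwise. *)
Lemma cheb_term_rec k i :
  cheb_term k.+2 i.+1 = e * cheb_term k.+1 i.+1 - p * cheb_term k i.
Proof.
rewrite /cheb_term; case: (leqP i k) => Hik; last first.
  by rewrite !bin_small; try lia; rewrite !mulr0 !mul0r !mulr0 subr0.
have -> : (k.+2 - i.+1 = (k - i).+1)%N by lia.
have -> : (k.+1 - i.+1 = k - i)%N by lia.
have -> : (k.+2 - 2 * i.+1 = k - 2 * i)%N by lia.
rewrite binS natrD; case: (leqP (2 * i).+1 k) => H2.
  have -> : (k.+1 - 2 * i.+1 = (k - 2 * i).-1)%N by lia.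
  have -> : e ^+ (k - 2 * i) = e * e ^+ (k - 2 * i).-1.
    by rewrite -exprS; congr (_ ^+ _); lia.
  rewrite !exprS; ring.
rewrite (bin_small (n := k - i)); last by lia.
rewrite !exprS; ring.
Qed.

Lemma cheb0 : cheb 0 = 1.
Proof. by rewrite /cheb /cheb_partial big_ord1 /cheb_term /= bin0 !expr0 !mulr1. Qed.

Lemma cheb1 : cheb 1 = e.
Proof. by rewrite /cheb /cheb_partial big_ord1 /cheb_term /= bin0 !expr0 !mulr1 mul1r expr1. Qed.

Lemma cheb_rec k : cheb k.+2 = e * cheb k.+1 - p * cheb k.
Proof.
rewrite -(@cheb_partial_cheb k.+3) -?(@cheb_partial_cheb k.+3 k.+1)
        -?(@cheb_partial_cheb k.+2 k); try lia.
rewrite /cheb_partial big_ord_recl [in X in e * X]big_ord_recl mulrDr.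
under eq_bigr do rewrite cheb_term_rec.
rewrite sumrB -!mulr_sumr.
have -> : cheb_term k.+2 0 = e * cheb_term k.+1 0.
  by rewrite /cheb_term !subn0 !bin0 !expr0 !mul1r !mulr1 exprS.
rewrite /=; ring.
Qed.
End Chebyshev.

Lemma lucas_closed_form (R : comNzRingType) (a b : R) (V : nat -> R) :
  V 0%N = 1 -> V 1%N = a + b ->
  (forall k, V k.+2 = (a + b) * V k.+1 - a * b * V k) ->
  forall k, (a - b) * V k = a ^+ k.+1 - b ^+ k.+1.
Proof.
move=> V0 V1 Vrec.
suff H k : (a - b) * V k = a ^+ k.+1 - b ^+ k.+1 /\
           (a - b) * V k.+1 = a ^+ k.+2 - b ^+ k.+2 by move=> k; case: (H k).
elim: k => [|k [IH1 IH2]]; first by rewrite V0 V1; split; ring.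
split=> //; rewrite Vrec.
transitivity ((a + b) * ((a - b) * V k.+1) - a * b * ((a - b) * V k)); first by ring.
by rewrite IH1 IH2 !exprS; ring.
Qed.

Lemma phi_psi_unique (F G : nat -> fps) :
  (forall k, F k = (if k is 0 then 1 else 0)
                   + fX * (if k is k'.+1 then F k' else 0) + fX * G k) ->
  (forall k, G k = fX * (if k is k'.+1 then G k' else 0) + fX * F k.+1) ->
  forall k, F k = phi k /\ G k = psi k.
Proof.
move=> HF HG.
suff H n k : F k n = (c n k)%:R /\ G k n = (d n k)%:R.
  by move=> k; split; apply: funext => n; case: (H n k).
elim: n k => [|n IH] k; split.
- by rewrite HF !coefD_fps !coef_fXM !addr0; case: k => [|k] //=; rewrite coef0_fps.
- by rewrite HG !coefD_fps !coef_fXM !addr0.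
- rewrite HF !coefD_fps !coef_fXM /=; case: k => [|k] /=; rewrite ?coef0_fps add0r.
    by rewrite add0n (proj2 (IH 0%N)).
  by rewrite natrD (proj1 (IH k)) (proj2 (IH k.+1)).
- rewrite HG !coefD_fps !coef_fXM /=; case: k => [|k] /=; rewrite ?coef0_fps ?add0r.
    by rewrite add0n (proj1 (IH 1%N)).
  by rewrite natrD (proj2 (IH k)) (proj1 (IH k.+2)).
Qed.

(* The closed forms, with t = z^3 u, u = 1/(1-t)^2, w = 1/(1-t) and
   U_k = cheb (2 - t) ((1 - t)^2) k:
     psi_k     = z^(k+2) u^(k+1) w U_k           (= t^(k+1) U_k / (z^(2k+1) (1-t))),
     phi_0     = w,
     phi_(k+1) = z^(k+1) u^k w (u U_k - U_(k-1)). *)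
Section ClosedForms.
Variables t u w : fps.
Hypothesis t_def : t = fX ^+ 3 * u.
Hypothesis u_inv : u * (1 - t) ^+ 2 = 1.
Hypothesis w_inv : w * (1 - t) = 1.

Let U k := cheb (fC 2 - t) ((1 - t) ^+ 2) k.
Let U_prev k := if k is k'.+1 then U k' else 0.

Definition psi_form k := fX ^+ k.+2 * u ^+ k.+1 * w * U k.
Definition phi_form k :=
  if k is k'.+1 then fX ^+ k'.+1 * u ^+ k' * w * (u * U k' - U_prev k') else w.

Lemma U_rec k : U k.+1 = (fC 2 - t) * U k - (1 - t) ^+ 2 * U_prev k.
Proof. by case: k => [|k]; [rewrite /U cheb1 cheb0 /=; ring | exact: cheb_rec]. Qed.

Lemma psi_form_eqn k :
  psi_form k = fX * (if k is k'.+1 then psi_form k' else 0) + fX * phi_form k.+1.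
Proof. by case: k => [|k]; rewrite /psi_form /phi_form /= !exprS; ring. Qed.

(* Each case reduces to a multiple of  u (1 - t)^2 - 1  or  w (1 - t) - 1. *)
Lemma phi_form_eqn k :
  phi_form k = (if k is 0 then 1 else 0)
               + fX * (if k is k'.+1 then phi_form k' else 0) + fX * psi_form k.
Proof.
have u_inv' : u * (1 - fX ^+ 3 * u) ^+ 2 - 1 = 0 by rewrite -t_def u_inv subrr.
apply/eqP; rewrite -subr_eq0; apply/eqP.
case: k => [|[|k]]; rewrite /psi_form /phi_form /=.
- transitivity (w * (1 - t) - 1); first by rewrite /U cheb0 t_def; ring.
  by rewrite w_inv subrr.
- transitivity (fX * w * (u * (1 - fX ^+ 3 * u) ^+ 2 - 1)).
    by rewrite /U cheb0 cheb1 (rmorph_nat fC 2) t_def !exprS; ring.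
  by rewrite u_inv' mulr0.
- transitivity (fX ^+ k.+2 * u ^+ k * w * (u * (1 - fX ^+ 3 * u) ^+ 2 - 1) *
                (2 * u * U k - (u * (1 - fX ^+ 3 * u) ^+ 2 + 1) * U_prev k)).
    by rewrite !U_rec (rmorph_nat fC 2) t_def /= !exprS; ring.
  by rewrite u_inv' mulr0 mul0r.
Qed.

Lemma closed_forms k : phi k = phi_form k /\ psi k = psi_form k.
Proof. by have [-> ->] := phi_psi_unique phi_form_eqn psi_form_eqn k. Qed.
End ClosedForms.

Lemma is_t_factor t : is_t t ->
  exists u w, [/\ t = fX ^+ 3 * u, u * (1 - t) ^+ 2 = 1, w * (1 - t) = 1
                & u 0%N = 1].
Proof.
move=> [t_eqn t_low]; pose u : fps := fun n => t n.+3.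
have t_def : t = fX ^+ 3 * u.
  apply: funext => n; rewrite fX3M.
  by case: n => [|[|[|n]]]; rewrite !coef_fXM // t_low // fexpE coef_fX3.
have u_inv : u * (1 - t) ^+ 2 = 1.
  have E : fX ^+ 3 = t * (1 - t) ^+ 2.
    by apply: funext => n; rewrite -fexpE t_eqn fmulE fexpE fsubE fC1E.
  do 3 apply: fXM_inj; rewrite -!fX3M.
  by rewrite mulrA -t_def -E mulr1.
exists u, (u * (1 - t)); split => //; first by rewrite -mulrA -expr2.
by rewrite /u t_low // fexpE coef_fX3.
Qed.

Lemma cheb_sumE t k : cheb_sum t k = cheb (fC 2 - t) ((1 - t) ^+ 2) k.
Proof.
rewrite /cheb_sum fsumE /cheb /cheb_partial; apply: eq_bigr => i _.
rewrite fscaleE /cheb_term fmulE !fexpE !fsubE fC1E rmorphM rmorphXn rmorphN1.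
by rewrite (rmorph_nat fC) exprM.
Qed.

(* psi_k = t^(k+1) U_k / (z^(2k+1) (1 - t)), denominators cleared. *)
Lemma psi_cheb t : is_t t -> forall k,
  fX ^+ (2 * k + 1) * (1 - t) * psi k = t ^+ k.+1 * cheb (fC 2 - t) ((1 - t) ^+ 2) k.
Proof.
move=> /is_t_factor [u [w [t_def u_inv w_inv _]]] k.
rewrite (proj2 (closed_forms t_def u_inv w_inv k)) /psi_form.
have -> : t ^+ k.+1 = fX ^+ (2 * k + 1) * fX ^+ k.+2 * u ^+ k.+1.
  by rewrite {1}t_def exprMn -exprM -exprD; congr (_ ^+ _ * _); lia.
transitivity (fX ^+ (2 * k + 1) * fX ^+ k.+2 * u ^+ k.+1 *
              cheb (fC 2 - t) ((1 - t) ^+ 2) k * (w * (1 - t))); first by ring.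
by rewrite w_inv mulr1.
Qed.

(* 4t - 3t^2 = z^3 u (4 - 3t) and u (4 - 3t) has constant term 4, so the
   discriminant has a square root in the series in w = z^(1/2). *)
Lemma exists_sqrt_disc t : is_t t -> exists s, is_sqrt_disc t s.
Proof.
move=> t_is_t; have [u [_ [t_def _ _ u0]]] := is_t_factor t_is_t.
have t0 : t 0%N = 0 by rewrite t_def fX3M coef_fXM.
pose g := u * (fC 4 - fC 3 * t).
have [r Hr] : exists r, r * r = fup g.
  apply: (@exists_sqrt _ 2) => //.
  rewrite /fup /= /g -fmulE /fmul big_ord1 u0 mul1r subn0 coefD_fps coefN_fps.
  by rewrite -fscaleE /fscale t0 mulr0 subr0.
exists (fX ^+ 3 * r); rewrite /is_sqrt_disc fmulE fsubE !fscaleE fexpE.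
have -> : fC 4 * t - fC 3 * t ^+ 2 = fX ^+ 3 * g.
  by rewrite /g t_def; ring.
rewrite rmorphM /= -Hr rmorphXn /= fup_fX.
suff -> : fX ^+ 3 * r * (fX ^+ 3 * r) = (fX * fX) ^+ 3 * (r * r) by [].
ring.
Qed.

(* mu_2 and mu_3 are the roots of X^2 - (2-t) X + (1-t)^2, so U_k (which obeys
   the recurrence with these coefficients) is (mu_3^(k+1) - mu_2^(k+1)) / (mu_3 - mu_2). *)
Lemma cheb_mu t s : is_sqrt_disc t s -> forall k,
  (mu3 t s - mu2 t s) * fup (cheb (fC 2 - t) ((1 - t) ^+ 2) k)
  = mu3 t s ^+ k.+1 - mu2 t s ^+ k.+1.
Proof.
move=> s_sqrt; set e := fup (fC 2 - t); set h := fC (1 / 2).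
have mu2E : mu2 t s = h * (e - s) by rewrite /mu2 fscaleE fsubE.
have mu3E : mu3 t s = h * (e + s) by rewrite /mu3 fscaleE faddE.
have s2 : s * s = fup (fC 4 * t - fC 3 * t ^+ 2).
  by apply: funext => n; rewrite -fmulE s_sqrt fsubE !fscaleE fexpE.
have h2 : h * 2 = 1 by rewrite -(rmorph_nat fC 2) -rmorphM -fC1E; congr fC.
have h4 : h * h * 4 = 1 by rewrite -(rmorph_nat fC 4) -!rmorphM -fC1E; congr fC.
have mu_sum : mu3 t s + mu2 t s = e.
  transitivity (e * (h * 2)); first by rewrite mu2E mu3E; ring.
  by rewrite h2 mulr1.
have mu_prod : mu3 t s * mu2 t s = fup ((1 - t) ^+ 2).
  transitivity (h * h * (e * e - s * s)); first by rewrite mu2E mu3E; ring.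
  have disc : fC 4 * t - fC 3 * t ^+ 2 = (fC 2 - t) ^+ 2 - 4 * (1 - t) ^+ 2.
    by rewrite (rmorph_nat fC 2) (rmorph_nat fC 4) (rmorph_nat fC 3); ring.
  rewrite s2 disc rmorphB rmorphM rmorphXn rmorph_nat /= -/e.
  transitivity (h * h * 4 * fup (1 - t) ^+ 2); first by ring.
  by rewrite h4 mul1r.
apply: lucas_closed_form => [|/=|k].
- by rewrite cheb0 rmorph1.
- by rewrite cheb1 mu_sum.
- by rewrite mu_sum mu_prod cheb_rec rmorphB !rmorphM.
Qed.

Lemma psi_eqn k : psi k = fX * psi_prev k + fX * phi k.+1.
Proof.
apply: funext => -[|n]; rewrite coefD_fps !coef_fXM ?addr0 //=.
by rewrite /psi /phi natrD; case: k.
Qed.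

Lemma phi0_inv t : is_t t -> (1 - t) * phi 0 = 1.
Proof.
move=> /is_t_factor [u [w [t_def u_inv w_inv _]]].
by rewrite (proj1 (closed_forms t_def u_inv w_inv 0)) mulrC.
Qed.

Theorem mainTheorem7 :
  (exists t, is_t t) /\
  forall t : fps, is_t t ->
    (forall k : nat,
       fmul (fmul (fexp fX (2 * k + 1)) (fsub (fC 1) t)) (psi k)
       =1 fmul (fexp t k.+1) (cheb_sum t k)) /\
    (exists s, is_sqrt_disc t s) /\
    (forall s : fps, is_sqrt_disc t s -> forall k : nat,
       fmul (fup (fmul (fmul (fexp fX (2 * k + 1)) (fsub (fC 1) t)) (psi k)))
            (fsub (mu3 t s) (mu2 t s))
       =1 fmul (fup (fexp t k.+1))
               (fsub (fexp (mu3 t s) k.+1) (fexp (mu2 t s) k.+1))) /\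
    fmul (fsub (fC 1) t) (phi 0) =1 fC 1 /\
    (forall k : nat, fmul fX (phi k.+1) =1 fsub (psi k) (fmul fX (psi_prev k))).
Proof.
split; first exact: exists_t.
move=> t t_is_t; have psiE := psi_cheb t_is_t.
split; [|split; [exact: exists_sqrt_disc|split; [|split]]].
- by move=> k; apply: fps_eqfun; rewrite !fmulE !fexpE fsubE fC1E cheb_sumE psiE.
- move=> s s_sqrt k; apply: fps_eqfun; rewrite !fmulE !fexpE !fsubE fC1E psiE.
  by rewrite -(cheb_mu s_sqrt) rmorphM /=; ring.
- by apply: fps_eqfun; rewrite fmulE fsubE fC1E phi0_inv.
- by move=> k; apply: fps_eqfun; rewrite !fmulE fsubE psi_eqn; ring.
Qed.
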